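(* Let $f(i)=\log_2(1+i)$ for $i\in\mathbb{N}$ and let $(n_k)_{k\ge1}$ be an increasing sequence of positive integers with $\sum_{k=1}^\infty \frac{1}{f(n_k)}<\frac1{10}$. Then there exists a $1$-unconditional norm $\|\cdot\|$ on $c_{00}$ which satisfies, for every $x\in c_{00}$, the implicit equation $$\|x\|=\max\Big\{\|x\|_{c_0},\Big(\sum_{k=1}^\infty \|x\|_{n_k}^2\Big)^{1/2}\Big\},\qquad\text{where}\qquad \|x\|_k=\max_{E_1<\cdots<E_k}\frac{1}{f(k)}\sum_{i=1}^k\|E_ix\|,$$ the maximum being over all $k$-tuples of subsets $E_1<\cdots<E_k$ of $\mathbb{N}$.
   Context: $c_{00}$ is the space of finitely supported real sequences on $\mathbb{N}$, with unit vector basis $(e_i)$. For $E,F\subseteq\mathbb{N}$, $E<F$ means $\max E<\min F$. For $x\in c_{00}$ and $E\subseteq\mathbb{N}$, $Ex$ denotes the restriction: $Ex(i)=x(i)$ if $i\in E$ and $0$ otherwise. $\|x\|_{c_0}=\max_i|x(i)|$. *)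

From Stdlib Require Import Reals Lra List.
From Coquelicot Require Import Coquelicot.
Open Scope R_scope.

Definition c00 (x : nat -> R) : Prop :=
  exists m : nat, forall i : nat, (m <= i)%nat -> x i = 0.

Definition flog (i : nat) : R := ln (1 + INR i) / ln 2.

(* Subsets of N as characteristic functions; E x = restriction. *)
Definition restr (E : nat -> bool) (x : nat -> R) : nat -> R :=
  fun j => if E j then x j else 0.

Definition set_lt (E F : nat -> bool) : Prop :=
  forall a b : nat, E a = true -> F b = true -> (a < b)%nat.

Definition admissible (k : nat) (E : nat -> nat -> bool) : Prop :=
  (forall i, (i < k)%nat -> exists a, E i a = true) /\
  (forall i, (S i < k)%nat -> set_lt (E i) (E (S i))).

Definition normk (N : (nat -> R) -> R) (k : nat) (x : nat -> R) : R :=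
  real (Lub_Rbar (fun r => exists E, admissible k E /\
     r = / flog k * fold_right Rplus 0 (map (fun i => N (restr (E i) x)) (seq 0 k)))).

Definition c0norm (x : nat -> R) : R :=
  real (Lub_Rbar (fun r => exists i, r = Rabs (x i))).

Definition is_norm_c00 (N : (nat -> R) -> R) : Prop :=
  (forall x, c00 x -> N x = 0 -> forall i, x i = 0) /\
  (forall a x, c00 x -> N (fun i => a * x i) = Rabs a * N x) /\
  (forall x y, c00 x -> c00 y -> N (fun i => x i + y i) <= N x + N y).

Definition one_unconditional (N : (nat -> R) -> R) : Prop :=
  forall (eps : nat -> R) x, c00 x -> (forall i, eps i = 1 \/ eps i = -1) ->
    N (fun i => eps i * x i) = N x.

From Stdlib Require Import Reals List.
From Coquelicot Require Import Coquelicot.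
From Stdlib Require Import Lra Lia FunctionalExtensionality.
Open Scope R_scope.

(* The norm is obtained by a Knaster-Tarski argument.  Let [Phi N x] be the
   right-hand side of the implicit equation computed with [N] in place of the
   unknown norm.  [Phi] is monotone in [N]; since [||x||_k <= ||x||_1 / f(k)]
   and [sum_k 1/f(n_k) <= 1] (the hypothesis [< 1/10] is only used in this
   weaker form), it maps seminorms dominated by [||.||_1] to such seminorms,
   and it preserves homogeneity, subadditivity (Minkowski in l2) and
   1-unconditionality.  Hence the pointwise supremum [Nmax] of all such
   seminorms [N] with [N <= Phi N] satisfies [Nmax <= Phi Nmax]; then
   [Phi Nmax] belongs to the same class, so [Phi Nmax <= Nmax].  Finally
   [Nmax = Phi Nmax >= ||.||_c0] makes [Nmax] definite. *)

Section Suprema.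
Context {T : Type} (P : T -> Prop).

(* [real] maps the junk values [p_infty] and [m_infty] to 0, hence the
   nonemptiness and boundedness hypotheses below. *)
Definition sup (g : T -> R) : R :=
  real (Lub_Rbar (fun r => exists t, P t /\ r = g t)).

Lemma sup_is_lub g B : (exists t, P t) -> (forall t, P t -> g t <= B) ->
  is_lub_Rbar (fun r => exists t, P t /\ r = g t) (sup g).
Proof.
  intros [t0 Pt0] HB. unfold sup.
  pose proof (Lub_Rbar_correct (fun r => exists t, P t /\ r = g t)) as Hlub.
  destruct (Lub_Rbar (fun r => exists t, P t /\ r = g t)) as [l| |]; simpl.
  - exact Hlub.
  - exfalso. apply (proj2 Hlub (Finite B)). intros r [t [Pt ->]]. simpl. auto.
  - exfalso. apply (proj1 Hlub (g t0)). eauto.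
Qed.

Lemma sup_upper g B t : (forall t, P t -> g t <= B) -> P t -> g t <= sup g.
Proof.
  intros HB Pt. apply (proj1 (sup_is_lub g B (ex_intro _ t Pt) HB)). eauto.
Qed.

Lemma sup_least g B : (exists t, P t) -> (forall t, P t -> g t <= B) -> sup g <= B.
Proof.
  intros Hne HB. apply (proj2 (sup_is_lub g B Hne HB) (Finite B)).
  intros r [t [Pt ->]]. simpl. auto.
Qed.

Lemma sup_ext g h : (forall t, P t -> g t = h t) -> sup g = sup h.
Proof.
  intros Hgh. unfold sup. f_equal. apply Lub_Rbar_eqset. intros r.
  split; intros [t [Pt ->]]; exists t; split; auto.
  symmetry. auto.
Qed.

Lemma sup_scale g c B : (exists t, P t) -> (forall t, P t -> g t <= B) -> 0 <= c ->
  sup (fun t => c * g t) = c * sup g.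
Proof.
  intros Hne HB Hc. destruct Hc as [Hc | <-].
  - apply Rle_antisym.
    + apply (sup_least _ (c * sup g) Hne). intros t Pt.
      apply Rmult_le_compat_l; [lra | exact (sup_upper g B t HB Pt)].
    + assert (Hub : forall t, P t -> c * g t <= c * B).
      { intros t Pt. apply Rmult_le_compat_l; auto; lra. }
      assert (sup g <= / c * sup (fun t => c * g t)).
      { apply (sup_least _ _ Hne). intros t Pt.
        replace (g t) with (/ c * (c * g t)) by (field; lra).
        apply Rmult_le_compat_l.
        - left. apply Rinv_0_lt_compat. exact Hc.
        - exact (sup_upper (fun t => c * g t) (c * B) t Hub Pt). }
      replace (sup (fun t => c * g t)) with (c * (/ c * sup (fun t => c * g t)))
        by (field; lra).
      apply Rmult_le_compat_l; lra.
  - rewrite Rmult_0_l. destruct Hne as [t0 Pt0].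
    apply Rle_antisym.
    + apply sup_least; eauto. intros. lra.
    + apply (Rle_trans _ (0 * g t0)); [right; ring |].
      apply (sup_upper (fun t => 0 * g t) 0); auto. intros. lra.
Qed.

End Suprema.

Definition fsum (k : nat) (f : nat -> R) : R := fold_right Rplus 0 (map f (seq 0 k)).

Lemma fold_right_Rplus_init (l : list R) a : fold_right Rplus a l = fold_right Rplus 0 l + a.
Proof. induction l as [|b l IH]; simpl; try rewrite IH; lra. Qed.

Lemma fsum_0 f : fsum 0 f = 0.
Proof. reflexivity. Qed.

Lemma fsum_S k f : fsum (S k) f = fsum k f + f k.
Proof.
  unfold fsum. rewrite seq_S, map_app, fold_right_app. simpl.
  rewrite fold_right_Rplus_init. lra.
Qed.

Lemma fsum_le k f g : (forall i, (i < k)%nat -> f i <= g i) -> fsum k f <= fsum k g.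
Proof.
  induction k as [|k IH]; intros Hfg; [rewrite !fsum_0; lra |].
  rewrite !fsum_S. apply Rplus_le_compat; auto.
Qed.

Lemma fsum_ext k f g : (forall i, (i < k)%nat -> f i = g i) -> fsum k f = fsum k g.
Proof.
  induction k as [|k IH]; intros Hfg; [reflexivity |].
  rewrite !fsum_S, IH, Hfg; auto.
Qed.

Lemma fsum_plus k f g : fsum k (fun i => f i + g i) = fsum k f + fsum k g.
Proof. induction k as [|k IH]; [rewrite !fsum_0; lra |]. rewrite !fsum_S, IH. lra. Qed.

Lemma fsum_scal k c f : fsum k (fun i => c * f i) = c * fsum k f.
Proof. induction k as [|k IH]; [rewrite !fsum_0; lra |]. rewrite !fsum_S, IH. lra. Qed.

Lemma fsum_zero k f : (forall i, (i < k)%nat -> f i = 0) -> fsum k f = 0.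
Proof.
  induction k as [|k IH]; intros Hf; [reflexivity |].
  rewrite fsum_S, IH, Hf; auto. lra.
Qed.

Lemma fsum_nonneg k f : (forall i, (i < k)%nat -> 0 <= f i) -> 0 <= fsum k f.
Proof.
  intros Hf. rewrite <- (fsum_zero k (fun _ => 0)) by auto. apply fsum_le. exact Hf.
Qed.

Lemma fsum_term k f i : (i < k)%nat -> (forall j, 0 <= f j) -> f i <= fsum k f.
Proof.
  induction k as [|k IH]; intros Hi Hf; [lia |]. rewrite fsum_S.
  destruct (Nat.eq_dec i k) as [-> | Hik].
  - pose proof (fsum_nonneg k f (fun j _ => Hf j)). lra.
  - pose proof (IH ltac:(lia) Hf). pose proof (Hf k). lra.
Qed.

Lemma fsum_swap k m (g : nat -> nat -> R) :
  fsum k (fun i => fsum m (fun j => g i j)) = fsum m (fun j => fsum k (fun i => g i j)).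
Proof.
  induction k as [|k IH].
  - symmetry. apply fsum_zero. reflexivity.
  - rewrite fsum_S, IH, <- fsum_plus. apply fsum_ext. intros. rewrite fsum_S. reflexivity.
Qed.

Definition vanishes_from (M : nat) (x : nat -> R) : Prop := forall j, (M <= j)%nat -> x j = 0.

Definition l1 (M : nat) (x : nat -> R) : R := fsum M (fun j => Rabs (x j)).

Lemma vanishes_from_le M M' x : (M <= M')%nat -> vanishes_from M x -> vanishes_from M' x.
Proof. intros HM Hx j Hj. apply Hx. lia. Qed.

Lemma vanishes_from_restr M E x : vanishes_from M x -> vanishes_from M (restr E x).
Proof. intros Hx j Hj. unfold restr. destruct (E j); auto. Qed.

Lemma c00_restr E x : c00 x -> c00 (restr E x).
Proof. intros [M Hx]. exists M. exact (vanishes_from_restr M E x Hx). Qed.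

Lemma restr_mul E (eps x : nat -> R) :
  restr E (fun j => eps j * x j) = (fun j => eps j * restr E x j).
Proof. apply functional_extensionality. intros j. unfold restr. destruct (E j); ring. Qed.

Lemma restr_add E (x y : nat -> R) :
  restr E (fun j => x j + y j) = (fun j => restr E x j + restr E y j).
Proof. apply functional_extensionality. intros j. unfold restr. destruct (E j); ring. Qed.

Lemma l1_nonneg M x : 0 <= l1 M x.
Proof. apply fsum_nonneg. intros. apply Rabs_pos. Qed.

Lemma Rabs_le_l1 M x i : vanishes_from M x -> Rabs (x i) <= l1 M x.
Proof.
  intros Hx. destruct (Nat.lt_ge_cases i M) as [Hi | Hi].
  - apply (fsum_term M (fun j => Rabs (x j))); auto. intros. apply Rabs_pos.
  - rewrite Hx, Rabs_R0 by exact Hi. apply l1_nonneg.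
Qed.

Lemma admissible_lt k E i j a b : admissible k E -> (i < j)%nat -> (j < k)%nat ->
  E i a = true -> E j b = true -> (a < b)%nat.
Proof.
  intros [Hne Hlt]. revert b. induction j as [|j IH]; intros b Hij Hjk Ha Hb; [lia |].
  destruct (Nat.eq_dec i j) as [-> | Hij'].
  - exact (Hlt j Hjk a b Ha Hb).
  - destruct (Hne j ltac:(lia)) as [c Hc].
    pose proof (IH c ltac:(lia) ltac:(lia) Ha Hc). pose proof (Hlt j Hjk c b Hc Hb). lia.
Qed.

Lemma admissible_singletons k : exists E, admissible k E.
Proof.
  exists (fun i a => Nat.eqb a i). split.
  - intros i _. exists i. apply Nat.eqb_refl.
  - intros i _ a b Ha Hb. apply Nat.eqb_eq in Ha, Hb. lia.
Qed.

(* At most one block of an admissible family contains [a]. *)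
Lemma fsum_admissible_indicator k E a r : admissible k E -> 0 <= r ->
  fsum k (fun i => if E i a then r else 0) <= r.
Proof.
  intros Hadm Hr.
  enough (Hm : forall m, (m <= k)%nat -> fsum m (fun i => if E i a then r else 0) <= r)
    by (apply Hm; lia).
  induction m as [|m IH]; intros Hm; [rewrite !fsum_0; lra |].
  rewrite fsum_S. destruct (E m a) eqn:Ema.
  - rewrite fsum_zero; [lra |]. intros i Hi. destruct (E i a) eqn:Eia; auto.
    pose proof (admissible_lt k E i m a a Hadm Hi ltac:(lia) Eia Ema). lia.
  - pose proof (IH ltac:(lia)). lra.
Qed.

Lemma fsum_l1_restr_le k E M x : admissible k E ->
  fsum k (fun i => l1 M (restr (E i) x)) <= l1 M x.
Proof.
  intros Hadm. unfold l1. rewrite fsum_swap. apply fsum_le. intros j _.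
  rewrite (fsum_ext k _ (fun i => if E i j then Rabs (x j) else 0)).
  - apply fsum_admissible_indicator; auto. apply Rabs_pos.
  - intros i _. unfold restr. destruct (E i j); auto. apply Rabs_R0.
Qed.

Lemma flog_ge1 k : (1 <= k)%nat -> 1 <= flog k.
Proof.
  intros Hk. unfold flog.
  assert (Hln2 : 0 < ln 2) by (rewrite <- ln_1; apply ln_increasing; lra).
  apply le_INR in Hk. simpl in Hk.
  apply (Rmult_le_reg_r (ln 2)); auto. unfold Rdiv.
  rewrite Rmult_assoc, Rinv_l, Rmult_1_r, Rmult_1_l by lra.
  apply ln_le; lra.
Qed.

Lemma inv_flog_bounds k : (1 <= k)%nat -> 0 < / flog k <= 1.
Proof.
  intros Hk. pose proof (flog_ge1 k Hk). split.
  - apply Rinv_0_lt_compat. lra.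
  - rewrite <- Rinv_1. apply Rinv_le_contravar; lra.
Qed.

Definition l1_dominated (N : (nat -> R) -> R) : Prop :=
  (forall x, c00 x -> 0 <= N x) /\ (forall M x, vanishes_from M x -> N x <= l1 M x).

Definition homogeneous (N : (nat -> R) -> R) : Prop :=
  forall a x, c00 x -> N (fun i => a * x i) = Rabs a * N x.

Definition subadditive (N : (nat -> R) -> R) : Prop :=
  forall x y, c00 x -> c00 y -> N (fun i => x i + y i) <= N x + N y.

Definition signs (eps : nat -> R) : Prop := forall i, eps i = 1 \/ eps i = -1.

Lemma Rabs_signs eps a i : signs eps -> Rabs (eps i * a) = Rabs a.
Proof.
  intros Heps. rewrite Rabs_mult.
  destruct (Heps i) as [-> | ->]; rewrite ?Rabs_R1, ?Rabs_m1; ring.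
Qed.

Lemma c0norm_sup x : c0norm x = sup (fun _ : nat => True) (fun i => Rabs (x i)).
Proof.
  unfold c0norm, sup. f_equal. apply Lub_Rbar_eqset. intros r.
  split; [intros [i Hi] | intros [i [_ Hi]]]; exists i; auto.
Qed.

Lemma Rabs_le_c0norm M x i : vanishes_from M x -> Rabs (x i) <= c0norm x.
Proof.
  intros Hx. rewrite c0norm_sup. apply (sup_upper _ (fun j => Rabs (x j)) (l1 M x)); auto.
  intros j _. exact (Rabs_le_l1 M x j Hx).
Qed.

Lemma c0norm_bounds M x : vanishes_from M x -> 0 <= c0norm x <= l1 M x.
Proof.
  intros Hx. split.
  - apply (Rle_trans _ _ _ (Rabs_pos (x 0%nat))). exact (Rabs_le_c0norm M x 0 Hx).
  - rewrite c0norm_sup. apply sup_least; [exists 0%nat; auto |].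
    intros i _. exact (Rabs_le_l1 M x i Hx).
Qed.

Lemma c0norm_scale M a x : vanishes_from M x -> c0norm (fun i => a * x i) = Rabs a * c0norm x.
Proof.
  intros Hx. rewrite !c0norm_sup, <- (sup_scale _ _ _ (l1 M x)).
  - apply sup_ext. intros. apply Rabs_mult.
  - exists 0%nat; auto.
  - intros i _. exact (Rabs_le_l1 M x i Hx).
  - apply Rabs_pos.
Qed.

Lemma c0norm_add M x y : vanishes_from M x -> vanishes_from M y ->
  c0norm (fun i => x i + y i) <= c0norm x + c0norm y.
Proof.
  intros Hx Hy. rewrite (c0norm_sup (fun i => x i + y i)).
  apply sup_least; [exists 0%nat; auto |]. intros i _.
  apply (Rle_trans _ _ _ (Rabs_triang _ _)).
  apply Rplus_le_compat; [exact (Rabs_le_c0norm M x i Hx) | exact (Rabs_le_c0norm M y i Hy)].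
Qed.

Lemma c0norm_signs eps x : signs eps -> c0norm (fun i => eps i * x i) = c0norm x.
Proof.
  intros Heps. unfold c0norm. f_equal. apply Lub_Rbar_eqset. intros r.
  split; intros [i ->]; exists i; rewrite Rabs_signs; auto.
Qed.

Definition block_sum (N : (nat -> R) -> R) k x (E : nat -> nat -> bool) : R :=
  / flog k * fsum k (fun i => N (restr (E i) x)).

Lemma normk_sup N k x : normk N k x = sup (admissible k) (block_sum N k x).
Proof. reflexivity. Qed.

Lemma normk_signs N k eps x : one_unconditional N -> c00 x -> signs eps ->
  normk N k (fun i => eps i * x i) = normk N k x.
Proof.
  intros HN Hx Heps. rewrite !normk_sup. apply sup_ext. intros E _.
  unfold block_sum. f_equal. apply fsum_ext. intros i _.
  rewrite restr_mul. apply HN; auto. apply c00_restr. exact Hx.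
Qed.

Section BlockNorm.
Variables (N : (nat -> R) -> R) (k : nat).
Hypothesis N_dominated : l1_dominated N.
Hypothesis k_pos : (1 <= k)%nat.

Lemma block_sum_bounds M x E : vanishes_from M x -> admissible k E ->
  0 <= block_sum N k x E <= l1 M x / flog k.
Proof.
  intros Hx HE. destruct N_dominated as [HN0 HN1].
  pose proof (inv_flog_bounds k k_pos). unfold block_sum. split.
  - apply Rmult_le_pos; [lra |]. apply fsum_nonneg. intros. apply HN0.
    apply c00_restr. exists M. exact Hx.
  - unfold Rdiv. rewrite Rmult_comm. apply Rmult_le_compat_r; [lra |].
    apply (Rle_trans _ _ _ (fsum_le _ _ _ (fun i _ => HN1 M _ (vanishes_from_restr M (E i) x Hx)))).
    apply fsum_l1_restr_le. exact HE.
Qed.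

Lemma block_sum_le_normk M x E : vanishes_from M x -> admissible k E ->
  block_sum N k x E <= normk N k x.
Proof.
  intros Hx HE. rewrite normk_sup. apply (sup_upper _ _ (l1 M x / flog k)); auto.
  intros E' HE'. apply (block_sum_bounds M x E' Hx HE').
Qed.

Lemma normk_bounds M x : vanishes_from M x -> 0 <= normk N k x <= l1 M x / flog k.
Proof.
  intros Hx. destruct (admissible_singletons k) as [E HE]. split.
  - apply (Rle_trans _ _ _ (proj1 (block_sum_bounds M x E Hx HE))).
    exact (block_sum_le_normk M x E Hx HE).
  - rewrite normk_sup. apply sup_least; [exists E; exact HE |].
    intros E' HE'. apply (block_sum_bounds M x E' Hx HE').
Qed.

Lemma normk_mono N' M x : vanishes_from M x -> (forall y, c00 y -> N' y <= N y) ->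
  normk N' k x <= normk N k x.
Proof.
  intros Hx HN'. rewrite (normk_sup N'). apply sup_least; [apply admissible_singletons |].
  intros E HE. apply (Rle_trans _ (block_sum N k x E)); [| exact (block_sum_le_normk M x E Hx HE)].
  unfold block_sum. apply Rmult_le_compat_l; [left; apply inv_flog_bounds; exact k_pos |].
  apply fsum_le. intros i _. apply HN'. apply c00_restr. exists M. exact Hx.
Qed.

Lemma normk_scale M a x : homogeneous N -> vanishes_from M x ->
  normk N k (fun i => a * x i) = Rabs a * normk N k x.
Proof.
  intros HN Hx. rewrite !normk_sup, <- (sup_scale _ _ _ (l1 M x / flog k)).
  - apply sup_ext. intros E _. unfold block_sum.
    rewrite (fsum_ext k _ (fun i => Rabs a * N (restr (E i) x))); [rewrite fsum_scal; ring |].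
    intros i _. rewrite (restr_mul _ (fun _ => a)). apply HN.
    apply c00_restr. exists M. exact Hx.
  - apply admissible_singletons.
  - intros E HE. apply (block_sum_bounds M x E Hx HE).
  - apply Rabs_pos.
Qed.

Lemma normk_add M x y : subadditive N -> vanishes_from M x -> vanishes_from M y ->
  normk N k (fun i => x i + y i) <= normk N k x + normk N k y.
Proof.
  intros HN Hx Hy. rewrite (normk_sup N k (fun i => x i + y i)).
  apply sup_least; [apply admissible_singletons |]. intros E HE.
  apply (Rle_trans _ (block_sum N k x E + block_sum N k y E)).
  - unfold block_sum. rewrite <- Rmult_plus_distr_l, <- fsum_plus.
    apply Rmult_le_compat_l; [left; apply inv_flog_bounds; exact k_pos |].
    apply fsum_le. intros i _. rewrite restr_add.
    apply HN; apply c00_restr; [exists M; exact Hx | exists M; exact Hy].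
  - apply Rplus_le_compat;
      [exact (block_sum_le_normk M x E Hx HE) | exact (block_sum_le_normk M y E Hy HE)].
Qed.

End BlockNorm.

Lemma Series_nonneg (a : nat -> R) : (forall k, 0 <= a k) -> ex_series a -> 0 <= Series a.
Proof.
  intros Ha Ea.
  rewrite <- (Rmult_0_l (Series a)), <- Series_scal_l.
  apply Series_le; auto. intros k. rewrite Rmult_0_l. split; [lra | auto].
Qed.

Lemma ex_series_nonneg_le (a b : nat -> R) :
  (forall k, 0 <= a k <= b k) -> ex_series b -> ex_series a.
Proof.
  intros Hab Eb. apply (ex_series_le a b); auto. intros k.
  change (norm (a k)) with (Rabs (a k)). rewrite Rabs_pos_eq; apply Hab.
Qed.

Lemma ex_series_Rmult_l c (a : nat -> R) : ex_series a -> ex_series (fun k => c * a k).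
Proof. exact (ex_series_scal_l c a). Qed.

Lemma sq_add_le_weighted b c t : 0 < t -> (b + c) ^ 2 <= (1 + t) * b ^ 2 + (1 + / t) * c ^ 2.
Proof.
  intros Ht.
  assert (0 <= / t * (t * b - c) ^ 2)
    by (apply Rmult_le_pos; [left; apply Rinv_0_lt_compat; exact Ht | apply pow2_ge_0]).
  replace ((1 + t) * b ^ 2 + (1 + / t) * c ^ 2) with
    ((b + c) ^ 2 + / t * (t * b - c) ^ 2) by (field; lra).
  lra.
Qed.

(* Optimising [t = v / u] would give [(u + v)^2]; perturbing [u, v] by [eps/2]
   avoids the case [u = 0]. *)
Lemma sqrt_le_add_of_weighted A u v : 0 <= u -> 0 <= v ->
  (forall t, 0 < t -> A <= (1 + t) * u ^ 2 + (1 + / t) * v ^ 2) -> sqrt A <= u + v.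
Proof.
  intros Hu Hv HA. apply Rle_plus_epsilon. intros eps Heps.
  set (p := u + eps / 2). set (q := v + eps / 2).
  assert (Hp : 0 < p) by (unfold p; lra). assert (Hq : 0 < q) by (unfold q; lra).
  assert (Ht : 0 < q / p) by (apply Rdiv_lt_0_compat; lra).
  assert (HApq : A <= (p + q) ^ 2).
  { apply (Rle_trans _ _ _ (HA (q / p) Ht)).
    replace ((p + q) ^ 2) with ((1 + q / p) * p ^ 2 + (1 + / (q / p)) * q ^ 2) by (field; lra).
    apply Rplus_le_compat; apply Rmult_le_compat_l.
    - lra.
    - apply pow_incr. unfold p. lra.
    - assert (0 < / (q / p)) by (apply Rinv_0_lt_compat; exact Ht). lra.
    - apply pow_incr. unfold q. lra. }
  replace (u + v + eps) with (p + q) by (unfold p, q; lra).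
  rewrite <- (sqrt_pow2 (p + q)) by lra. apply sqrt_le_1_alt. exact HApq.
Qed.

Lemma sqrt_Series_sq_le_add (a b c : nat -> R) :
  (forall k, 0 <= a k <= b k + c k) -> (forall k, 0 <= b k) -> (forall k, 0 <= c k) ->
  ex_series (fun k => b k ^ 2) -> ex_series (fun k => c k ^ 2) ->
  sqrt (Series (fun k => a k ^ 2)) <=
  sqrt (Series (fun k => b k ^ 2)) + sqrt (Series (fun k => c k ^ 2)).
Proof.
  intros Ha Hb Hc Eb Ec.
  assert (HB : 0 <= Series (fun k => b k ^ 2))
    by (apply Series_nonneg; auto; intros; apply pow2_ge_0).
  assert (HC : 0 <= Series (fun k => c k ^ 2))
    by (apply Series_nonneg; auto; intros; apply pow2_ge_0).
  apply sqrt_le_add_of_weighted; try apply sqrt_pos.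
  intros t Ht. rewrite !pow2_sqrt by assumption.
  rewrite <- !Series_scal_l, <- Series_plus by (apply ex_series_Rmult_l; assumption).
  apply Series_le.
  - intros k. split; [apply pow2_ge_0 |].
    apply (Rle_trans _ ((b k + c k) ^ 2)); [apply pow_incr; apply Ha |].
    apply sq_add_le_weighted. exact Ht.
  - exact (ex_series_plus _ _ (ex_series_Rmult_l _ _ Eb) (ex_series_Rmult_l _ _ Ec)).
Qed.

Section FixedPoint.
Variables (n : nat -> nat) (s : R).
Hypothesis n_pos : forall k, (1 <= n k)%nat.
Hypothesis inv_flog_series : is_series (fun k => / flog (n k)) s.
Hypothesis inv_flog_sum_le1 : s <= 1.

Definition Phi (N : (nat -> R) -> R) (x : nat -> R) : R :=
  Rmax (c0norm x) (sqrt (Series (fun k => normk N (n k) x ^ 2))).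

Section NormkSeries.
Variables (N : (nat -> R) -> R) (M : nat) (x : nat -> R).
Hypothesis N_dominated : l1_dominated N.
Hypothesis x_vanishes : vanishes_from M x.

Lemma normk_sq_bounds k : 0 <= normk N (n k) x ^ 2 <= l1 M x ^ 2 * / flog (n k).
Proof.
  split; [apply pow2_ge_0 |].
  destruct (normk_bounds N (n k) N_dominated (n_pos k) M x x_vanishes) as [H0 H1].
  pose proof (inv_flog_bounds (n k) (n_pos k)). pose proof (pow2_ge_0 (l1 M x)).
  apply (Rle_trans _ ((l1 M x / flog (n k)) ^ 2)); [apply pow_incr; lra |].
  unfold Rdiv. rewrite Rpow_mult_distr. apply Rmult_le_compat_l; [lra |]. simpl. nra.
Qed.

Lemma ex_series_normk_sq : ex_series (fun k => normk N (n k) x ^ 2).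
Proof.
  apply (ex_series_nonneg_le _ _ normk_sq_bounds).
  apply ex_series_Rmult_l. exists s. exact inv_flog_series.
Qed.

Lemma Series_normk_sq_le : Series (fun k => normk N (n k) x ^ 2) <= l1 M x ^ 2.
Proof.
  assert (Hs : Series (fun k => / flog (n k)) = s) by exact (is_series_unique _ _ inv_flog_series).
  assert (Hs0 : 0 <= s).
  { rewrite <- Hs. apply Series_nonneg; [| exists s; exact inv_flog_series].
    intros k. left. apply inv_flog_bounds. apply n_pos. }
  apply (Rle_trans _ _ _ (Series_le _ _ normk_sq_bounds
           (ex_series_Rmult_l _ _ (ex_intro _ s inv_flog_series)))).
  rewrite Series_scal_l, Hs. pose proof (pow2_ge_0 (l1 M x)). nra.
Qed.

End NormkSeries.

Lemma Rabs_le_Phi N x i : c00 x -> Rabs (x i) <= Phi N x.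
Proof.
  intros [M Hx]. apply (Rle_trans _ (c0norm x)); [exact (Rabs_le_c0norm M x i Hx) | apply Rmax_l].
Qed.

Lemma Phi_dominated N : l1_dominated N -> l1_dominated (Phi N).
Proof.
  intros HN. split.
  - intros x Hx. apply (Rle_trans _ _ _ (Rabs_pos (x 0%nat))). apply Rabs_le_Phi. exact Hx.
  - intros M x Hx. apply Rmax_lub; [apply (c0norm_bounds M x Hx) |].
    rewrite <- (sqrt_pow2 (l1 M x)) by apply l1_nonneg.
    apply sqrt_le_1_alt. exact (Series_normk_sq_le N M x HN Hx).
Qed.

Lemma Phi_mono N N' x : l1_dominated N' -> l1_dominated N ->
  (forall y, c00 y -> N' y <= N y) -> c00 x -> Phi N' x <= Phi N x.
Proof.
  intros HN' HN Hle [M Hx]. apply Rle_max_compat_l. apply sqrt_le_1_alt.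
  apply Series_le; [| exact (ex_series_normk_sq N M x HN Hx)].
  intros k. split; [apply pow2_ge_0 |]. apply pow_incr. split.
  - apply (normk_bounds N' (n k) HN' (n_pos k) M x Hx).
  - exact (normk_mono N (n k) HN (n_pos k) N' M x Hx Hle).
Qed.

Lemma Phi_homogeneous N : l1_dominated N -> homogeneous N -> homogeneous (Phi N).
Proof.
  intros HB HN a x [M Hx]. unfold Phi. rewrite (c0norm_scale M a x Hx).
  rewrite (Series_ext _ (fun k => Rabs a ^ 2 * normk N (n k) x ^ 2)).
  - rewrite Series_scal_l, sqrt_mult_alt, sqrt_pow2 by (apply Rabs_pos || apply pow2_ge_0).
    apply RmaxRmult. apply Rabs_pos.
  - intros k. rewrite (normk_scale N (n k) HB (n_pos k) M a x HN Hx). ring.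
Qed.

Lemma Phi_subadditive N : l1_dominated N -> subadditive N -> subadditive (Phi N).
Proof.
  intros HB HN x y [Mx Hx] [My Hy].
  set (M := Nat.max Mx My).
  assert (Hx' : vanishes_from M x) by (apply (vanishes_from_le Mx); [lia | exact Hx]).
  assert (Hy' : vanishes_from M y) by (apply (vanishes_from_le My); [lia | exact Hy]).
  assert (Hxy : vanishes_from M (fun i => x i + y i))
    by (intros j Hj; rewrite Hx', Hy' by exact Hj; ring).
  unfold Phi. apply Rmax_lub.
  - apply (Rle_trans _ _ _ (c0norm_add M x y Hx' Hy')).
    apply Rplus_le_compat; apply Rmax_l.
  - apply (Rle_trans _ (sqrt (Series (fun k => normk N (n k) x ^ 2)) +
                        sqrt (Series (fun k => normk N (n k) y ^ 2)))).
    + apply sqrt_Series_sq_le_add.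
      * intros k. split; [apply (normk_bounds N (n k) HB (n_pos k) M _ Hxy) |].
        exact (normk_add N (n k) HB (n_pos k) M x y HN Hx' Hy').
      * intros k. apply (normk_bounds N (n k) HB (n_pos k) M x Hx').
      * intros k. apply (normk_bounds N (n k) HB (n_pos k) M y Hy').
      * exact (ex_series_normk_sq N M x HB Hx').
      * exact (ex_series_normk_sq N M y HB Hy').
    + apply Rplus_le_compat; apply Rmax_r.
Qed.

Lemma Phi_one_unconditional N : one_unconditional N -> one_unconditional (Phi N).
Proof.
  intros HN eps x Hx Heps. unfold Phi. rewrite (c0norm_signs eps x Heps).
  do 2 f_equal. apply Series_ext. intros k. rewrite normk_signs; auto.
Qed.

Record subsolution (N : (nat -> R) -> R) : Prop := {
  subsolution_dominated : l1_dominated N;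
  subsolution_homogeneous : homogeneous N;
  subsolution_subadditive : subadditive N;
  subsolution_one_unconditional : one_unconditional N;
  subsolution_le_Phi : forall x, c00 x -> N x <= Phi N x
}.

Definition Nmax (x : nat -> R) : R := sup subsolution (fun N => N x).

Lemma subsolution_zero : subsolution (fun _ => 0).
Proof.
  assert (H0 : l1_dominated (fun _ => 0)) by (split; intros; [lra | apply l1_nonneg]).
  split; auto.
  - intros a x _. ring.
  - intros x y _ _. lra.
  - intros eps x _ _. reflexivity.
  - intros x Hx. apply (Phi_dominated _ H0). exact Hx.
Qed.

Lemma le_Nmax N x : subsolution N -> c00 x -> N x <= Nmax x.
Proof.
  intros HN [M Hx]. apply (sup_upper _ (fun N' => N' x) (l1 M x)); auto.
  intros N' HN'. exact (proj2 (subsolution_dominated N' HN') M x Hx).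
Qed.

Lemma Nmax_le x B : (forall N, subsolution N -> N x <= B) -> Nmax x <= B.
Proof. intros HB. apply sup_least; auto. exists (fun _ => 0). exact subsolution_zero. Qed.

Lemma Nmax_dominated : l1_dominated Nmax.
Proof.
  split.
  - intros x Hx. exact (le_Nmax _ x subsolution_zero Hx).
  - intros M x Hx. apply Nmax_le. intros N HN. exact (proj2 (subsolution_dominated N HN) M x Hx).
Qed.

Lemma Nmax_homogeneous : homogeneous Nmax.
Proof.
  intros a x [M Hx]. unfold Nmax. rewrite <- (sup_scale _ _ _ (l1 M x)).
  - apply sup_ext. intros N HN. apply (subsolution_homogeneous N HN). exists M. exact Hx.
  - exists (fun _ => 0). exact subsolution_zero.
  - intros N HN. exact (proj2 (subsolution_dominated N HN) M x Hx).
  - apply Rabs_pos.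
Qed.

Lemma Nmax_subadditive : subadditive Nmax.
Proof.
  intros x y Hx Hy. apply Nmax_le. intros N HN.
  apply (Rle_trans _ _ _ (subsolution_subadditive N HN x y Hx Hy)).
  apply Rplus_le_compat; apply le_Nmax; auto.
Qed.

Lemma Nmax_one_unconditional : one_unconditional Nmax.
Proof.
  intros eps x Hx Heps. apply sup_ext. intros N HN.
  apply (subsolution_one_unconditional N HN); auto.
Qed.

Lemma Nmax_le_Phi x : c00 x -> Nmax x <= Phi Nmax x.
Proof.
  intros Hx. apply Nmax_le. intros N HN.
  apply (Rle_trans _ _ _ (subsolution_le_Phi N HN x Hx)).
  apply Phi_mono; auto.
  - exact (subsolution_dominated N HN).
  - exact Nmax_dominated.
  - intros y Hy. apply le_Nmax; auto.
Qed.

Lemma Phi_Nmax_subsolution : subsolution (Phi Nmax).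
Proof.
  split.
  - exact (Phi_dominated _ Nmax_dominated).
  - exact (Phi_homogeneous _ Nmax_dominated Nmax_homogeneous).
  - exact (Phi_subadditive _ Nmax_dominated Nmax_subadditive).
  - exact (Phi_one_unconditional _ Nmax_one_unconditional).
  - intros x Hx. apply Phi_mono; auto.
    + exact Nmax_dominated.
    + exact (Phi_dominated _ Nmax_dominated).
    + exact Nmax_le_Phi.
Qed.

Lemma Nmax_fixed x : c00 x -> Nmax x = Phi Nmax x.
Proof.
  intros Hx. apply Rle_antisym.
  - exact (Nmax_le_Phi x Hx).
  - exact (le_Nmax _ x Phi_Nmax_subsolution Hx).
Qed.

End FixedPoint.

Theorem proposition1p1 (n : nat -> nat) (s : R) :
  (0 < n 0)%nat ->
  (forall k, (n k < n (S k))%nat) ->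
  is_series (fun k => / flog (n k)) s ->
  s < 1 / 10 ->
  exists N : (nat -> R) -> R,
    is_norm_c00 N /\ one_unconditional N /\
    forall x, c00 x ->
      exists L : R,
        is_series (fun k => (normk N (n k) x) ^ 2) L /\
        N x = Rmax (c0norm x) (sqrt L).
Proof.
  intros Hn0 Hinc Hs Hs10.
  assert (Hn : forall k, (1 <= n k)%nat) by (induction k; [lia | specialize (Hinc k); lia]).
  assert (Hs1 : s <= 1) by lra.
  pose proof (Nmax_dominated n s Hn Hs Hs1) as Hdom.
  pose proof (Nmax_fixed n s Hn Hs Hs1) as Hfix.
  exists (Nmax n). split; [| split].
  - split; [| split].
    + intros x Hx Hzero i. apply Rabs_eq_0. apply Rle_antisym; [| apply Rabs_pos].
      rewrite <- Hzero, (Hfix x Hx). apply Rabs_le_Phi. exact Hx.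
    + exact (Nmax_homogeneous n s Hn Hs Hs1).
    + exact (Nmax_subadditive n s Hn Hs Hs1).
  - exact (Nmax_one_unconditional n).
  - intros x Hx. exists (Series (fun k => normk (Nmax n) (n k) x ^ 2)). split.
    + apply Series_correct. destruct Hx as [M Hx].
      exact (ex_series_normk_sq n s Hn Hs _ M x Hdom Hx).
    + exact (Hfix x Hx).
Qed.
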